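(* Let $\mathfrak{H}$ be a Euclidean space and let $(\mathcal{X},\mathsf{S},\gamma,(\Lambda_{a})_{a\in\mathcal{A}})$ be a spectral decomposition system for $\mathfrak{H}$ such that the set $\{\Lambda_a\}_{a\in\mathcal{A}}$ is closed in $\mathscr{L}(\mathcal{X},\mathfrak{H})$. Let $D$ be a nonempty $\mathsf{S}$-invariant subset of $\mathcal{X}$ and let $X\in\mathfrak{H}$. Then: (i) $N_{\mathsf{F}}(X;\gamma^{-1}(D))=\{\Lambda_a y: y\in N_{\mathsf{F}}(\gamma(X);D)\ \text{and}\ a\in\mathcal{A}_X\}$; (ii) $N_{\mathsf{L}}(X;\gamma^{-1}(D))=\{\Lambda_a y: y\in N_{\mathsf{L}}(\gamma(X);D)\ \text{and}\ a\in\mathcal{A}_X\}$.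
   Context: A Euclidean space is a finite-dimensional real Hilbert space; $\mathscr{L}(\mathcal{X},\mathfrak{H})$ carries the operator-norm topology. A spectral decomposition system for a Euclidean space $\mathfrak{H}$ is a tuple $(\mathcal{X},\mathsf{S},\gamma,(\Lambda_a)_{a\in\mathcal{A}})$ where $\mathcal{X}$ is a Euclidean space, $\mathsf{S}$ is a group acting on $\mathcal{X}$ such that each map $x\mapsto \mathsf{s}\cdot x$ is a linear isometry, $\gamma\colon\mathfrak{H}\to\mathcal{X}$ is a mapping, and each $\Lambda_a\colon\mathcal{X}\to\mathfrak{H}$ is a linear isometry, such that: [A] there exists a mapping $\tau\colon\mathcal{X}\to\mathcal{X}$ with $\tau(\mathsf{s}\cdot x)=\tau(x)$ for all $\mathsf{s},x$, $\tau(x)\in\mathsf{S}\cdot x$ for all $x$, and $\gamma\circ\Lambda_a=\tau$ for all $a\in\mathcal{A}$; [B] for every $X\in\mathfrak{H}$ there exists $a\in\mathcal{A}$ with $X=\Lambda_a\gamma(X)$; [C] $\langle X,Y\rangle\le\langle\gamma(X),\gamma(Y)\rangle$ for all $X,Y\in\mathfrak{H}$. $\mathcal{A}_X=\{a\in\mathcal{A}:X=\Lambda_a\gamma(X)\}$. A set $D\subset\mathcal{X}$ is $\mathsf{S}$-invariant if $\mathsf{s}\cdot x\in D$ for all $x\in D$, $\mathsf{s}\in\mathsf{S}$. For a nonempty subset $C$ of a Euclidean space $\mathcal{H}$: the Fréchet normal cone is $N_{\mathsf{F}}(x;C)=\{y:\limsup_{z\to x,\,z\in C\setminus\{x\}}\langle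 z-x,y\rangle/\|z-x\|\le0\}$ if $x\in C$, $\varnothing$ otherwise; the limiting normal cone $N_{\mathsf{L}}(x;C)$, for $x\in C$, is the set of $y$ for which there exist $x_n\to x$, $y_n\to y$ with $y_n\in N_{\mathsf{F}}(x_n;C)$ for all $n$, and $N_{\mathsf{L}}(x;C)=\varnothing$ for $x\notin C$. *)

(* Euclidean spaces are modelled as coordinate spaces
   'rV[R]_n with the standard inner product, R : realType. *)
From mathcomp Require Import all_boot all_order all_algebra.
From mathcomp Require Import all_classical all_reals.
Set Implicit Arguments. Unset Strict Implicit. Unset Printing Implicit Defensive.
Import Order.TTheory GRing.Theory Num.Theory.
Local Open Scope ring_scope.
Local Open Scope classical_set_scope.

Section Defs.
Variable R : realType.

Definition dotv n (u v : 'rV[R]_n) : R := (u *m v^T) 0 0.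
Definition enorm n (u : 'rV[R]_n) : R := Num.sqrt (dotv u u).

Definition econv n (u : nat -> 'rV[R]_n) (l : 'rV[R]_n) : Prop :=
  forall eps : R, 0 < eps -> exists N : nat, forall k, (N <= k)%N ->
    enorm (u k - l) < eps.

Definition lin_isometry n m (M : 'M[R]_(n, m)) : Prop :=
  forall x : 'rV[R]_n, enorm (x *m M) = enorm x.

Definition opconv n m (Mk : nat -> 'M[R]_(n, m)) (M : 'M[R]_(n, m)) : Prop :=
  forall eps : R, 0 < eps -> exists N : nat, forall k, (N <= k)%N ->
    forall x : 'rV[R]_n, enorm (x *m (Mk k - M)) <= eps * enorm x.

(* closedness in L(X,H) with the operator-norm topology (a metric topology,
   so closed = sequentially closed) *)
Definition opclosed n m (F : set 'M[R]_(n, m)) : Prop :=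
  forall (Mk : nat -> 'M[R]_(n, m)) (M : 'M[R]_(n, m)),
    (forall k, F (Mk k)) -> opconv Mk M -> F M.

(* Frechet normal cone:
   limsup_{z -> x, z in C\{x}} <z - x, y>/||z - x|| <= 0 *)
Definition frechet_normal n (C : set 'rV[R]_n) (x : 'rV[R]_n) : set 'rV[R]_n :=
  [set y | C x /\
    forall eps : R, 0 < eps -> exists2 delta : R, 0 < delta &
      forall z, C z -> z != x -> enorm (z - x) < delta ->
        dotv (z - x) y <= eps * enorm (z - x)].

Definition limiting_normal n (C : set 'rV[R]_n) (x : 'rV[R]_n) : set 'rV[R]_n :=
  [set y | C x /\
    exists (xs ys : nat -> 'rV[R]_n), econv xs x /\ econv ys y /\
      forall k, frechet_normal C (xs k) (ys k)].

Definition is_group (G : Type) (gmul : G -> G -> G) (gone : G) (ginv : G -> G) :=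
  [/\ forall a b c, gmul a (gmul b c) = gmul (gmul a b) c,
      forall a, gmul gone a = a, forall a, gmul a gone = a,
      forall a, gmul (ginv a) a = gone & forall a, gmul a (ginv a) = gone].

Definition is_isometric_action (G : Type) (gmul : G -> G -> G) (gone : G)
    n (act : G -> 'rV[R]_n -> 'rV[R]_n) :=
  [/\ forall x, act gone x = x,
      forall g h x, act (gmul g h) x = act g (act h x),
      forall g (a : R) x y, act g (a *: x + y) = a *: act g x + act g y &
      forall g x, enorm (act g x) = enorm x].

(* spectral decomposition system (X = R^n, S = G acting by act, gamma, Lambda)
   for the Euclidean space H = R^m *)
Definition spectral_decomposition_system (G : Type) (gmul : G -> G -> G)
    (gone : G) (ginv : G -> G) n (act : G -> 'rV[R]_n -> 'rV[R]_n)
    m (gamma : 'rV[R]_m -> 'rV[R]_n) (A : Type) (Lam : A -> 'M[R]_(n, m)) :=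
  [/\ is_group gmul gone ginv,
      is_isometric_action gmul gone act,
      forall a, lin_isometry (Lam a) &
      [/\
      (* [A] *)
      (exists tau : 'rV[R]_n -> 'rV[R]_n,
         [/\ forall s x, tau (act s x) = tau x,
             (forall x, exists s, tau x = act s x) &
             forall a x, gamma (x *m Lam a) = tau x]),
      (* [B] *)
      (forall X : 'rV[R]_m, exists a, X = gamma X *m Lam a) &
      (* [C] *)
      (forall X Y : 'rV[R]_m, dotv X Y <= dotv (gamma X) (gamma Y))]].

Definition A_of n m (gamma : 'rV[R]_m -> 'rV[R]_n) (A : Type)
    (Lam : A -> 'M[R]_(n, m)) (X : 'rV[R]_m) : set A :=
  [set a | X = gamma X *m Lam a].

Definition S_invariant (G : Type) n (act : G -> 'rV[R]_n -> 'rV[R]_n)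
    (D : set 'rV[R]_n) := forall x s, D x -> D (act s x).

End Defs.

(* Every [Lam a] maps [D] into [gamma^-1 D], since by [A] the point [gamma (x Lam a)] lies
   in the orbit of [x]. It also pushes a Fréchet normal [y] of [D] at [x] to one of
   [gamma^-1 D] at [x Lam a]: for [Z] near [x Lam a], inequality [C] applied against the
   point [x + t y] of the ray, with [t] proportional to [|Z - x Lam a|], produces some [w]
   in [D] whose distance to [x] controls [<Z - x Lam a, y Lam a>].
   Conversely, for a Fréchet normal [Y] at [X], write [X + t Y = u_t Lam (b_t)] by [B] and
   let [t -> 0]: normality of [Y] forces [|gamma X Lam (b_t) - X| = o(t)]. Linear
   isometries form a compact set and the family [Lam] is closed, so a subsequence of
   [Lam (b_t)] converges to some [Lam a] with [X = gamma X Lam a] and [Y] in the image of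
   [Lam a]; then [y = Y (Lam a)^T] is a Fréchet normal of [D] at [gamma X], because [Lam a]
   is an isometric embedding mapping [D] into [gamma^-1 D]. Limiting normals follow by
   applying both directions termwise to the approximating sequences and extracting once
   more. *)

From mathcomp Require Import all_boot all_order all_algebra.
From mathcomp Require Import all_classical all_reals all_analysis.
From mathcomp Require Import ring lra.
Import Order.TTheory GRing.Theory Num.Theory.
Import numFieldTopology.Exports numFieldNormedType.Exports.
Local Open Scope ring_scope.
Local Open Scope classical_set_scope.

Section InnerProduct.
Context {R : realType} {n : nat}.
Implicit Types (u v w : 'rV[R]_n) (a c : R).

Lemma dotvE u v : dotv u v = \sum_j u 0 j * v 0 j.
Proof. by rewrite /dotv !mxE; apply: eq_bigr => j _; rewrite mxE. Qed.

Lemma dotvC u v : dotv u v = dotv v u.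
Proof. by rewrite !dotvE; apply: eq_bigr => j _; rewrite mulrC. Qed.

Lemma dotvDl u v w : dotv (u + v) w = dotv u w + dotv v w.
Proof. by rewrite /dotv mulmxDl mxE. Qed.

Lemma dotvZl a u w : dotv (a *: u) w = a * dotv u w.
Proof. by rewrite /dotv -scalemxAl mxE. Qed.

Lemma dotvNl u w : dotv (- u) w = - dotv u w.
Proof. by rewrite /dotv mulNmx mxE. Qed.

Lemma dotvBl u v w : dotv (u - v) w = dotv u w - dotv v w.
Proof. by rewrite dotvDl dotvNl. Qed.

Lemma dotvDr u v w : dotv w (u + v) = dotv w u + dotv w v.
Proof. by rewrite dotvC dotvDl !(dotvC w). Qed.

Lemma dotvZr a u w : dotv w (a *: u) = a * dotv w u.
Proof. by rewrite dotvC dotvZl dotvC. Qed.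

Lemma dotvBr u v w : dotv w (u - v) = dotv w u - dotv w v.
Proof. by rewrite dotvC dotvBl !(dotvC w). Qed.

Lemma dotv0l w : dotv 0 w = 0.
Proof. by rewrite /dotv mul0mx mxE. Qed.

Lemma dotv0r w : dotv w 0 = 0.
Proof. by rewrite dotvC dotv0l. Qed.

Lemma dotvv_ge0 u : 0 <= dotv u u.
Proof. by rewrite dotvE; apply: sumr_ge0 => j _; rewrite -expr2 sqr_ge0. Qed.

Lemma dotvv_eq0 u : dotv u u = 0 -> u = 0.
Proof.
rewrite dotvE => /eqP; rewrite psumr_eq0 => [/allP u0|j _]; last first.
  by rewrite -expr2 sqr_ge0.
apply/rowP => j; rewrite mxE; apply/eqP.
by have := u0 j (mem_index_enum j); rewrite implyTb -expr2 sqrf_eq0.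
Qed.

Lemma enorm_ge0 u : 0 <= enorm u.
Proof. exact: sqrtr_ge0. Qed.

Lemma enorm_sqr u : enorm u ^+ 2 = dotv u u.
Proof. by rewrite sqr_sqrtr // dotvv_ge0. Qed.

Lemma enorm_le_dotv c u : 0 <= c -> dotv u u <= c ^+ 2 -> enorm u <= c.
Proof. by move=> c0 uc; rewrite -(ger0_norm c0) -sqrtr_sqr ler_wsqrtr. Qed.

Lemma enorm_eq0 u : enorm u = 0 -> u = 0.
Proof. by move=> u0; apply: dotvv_eq0; rewrite -enorm_sqr u0 expr0n. Qed.

Lemma enorm_gt0 {u} : u != 0 -> 0 < enorm u.
Proof.
move=> u0; rewrite lt_neqAle enorm_ge0 andbT eq_sym.
by apply: contra_neq u0; exact: enorm_eq0.
Qed.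

Lemma enorm0 : enorm (0 : 'rV[R]_n) = 0.
Proof. by rewrite /enorm dotv0l sqrtr0. Qed.

Lemma enormN u : enorm (- u) = enorm u.
Proof. by rewrite /enorm dotvNl dotvC dotvNl opprK. Qed.

Lemma enorm_distC u v : enorm (u - v) = enorm (v - u).
Proof. by rewrite -enormN opprB. Qed.

Lemma enormZ a u : enorm (a *: u) = `|a| * enorm u.
Proof. by rewrite /enorm dotvZl dotvZr mulrA -expr2 sqrtrM ?sqr_ge0 // sqrtr_sqr. Qed.

Lemma enorm_sqrB u v :
  enorm (u - v) ^+ 2 = enorm u ^+ 2 + enorm v ^+ 2 - 2 * dotv u v.
Proof. by rewrite !enorm_sqr !(dotvBl, dotvBr) (dotvC v u); ring. Qed.

Lemma cauchy_schwarz u v : dotv u v <= enorm u * enorm v.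
Proof.
have [->|u0] := eqVneq u 0; first by rewrite dotv0l enorm0 mul0r.
have [->|v0] := eqVneq v 0; first by rewrite dotv0r enorm0 mulr0.
have uv0 := mulr_gt0 (enorm_gt0 u0) (enorm_gt0 v0).
have := dotvv_ge0 (enorm v *: u - enorm u *: v).
rewrite !(dotvBl, dotvBr, dotvZl, dotvZr) -!enorm_sqr (dotvC v u) => h.
by rewrite -(ler_pM2l uv0); nra.
Qed.

Lemma enormD u v : enorm (u + v) <= enorm u + enorm v.
Proof.
apply: enorm_le_dotv; first by rewrite addr_ge0 ?enorm_ge0.
rewrite !(dotvDl, dotvDr) (dotvC v u) -!enorm_sqr.
have := cauchy_schwarz u v; nra.
Qed.

Lemma coord_le_enorm u i : `|u 0 i| <= enorm u.
Proof.
rewrite -sqrtr_sqr; apply: ler_wsqrtr.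
rewrite dotvE (bigD1 i) //= -expr2 lerDl.
by apply: sumr_ge0 => j _; rewrite -expr2 sqr_ge0.
Qed.

Lemma enorm_le_coord c u : 0 <= c -> (forall j, `|u 0 j| <= c) -> enorm u <= n%:R * c.
Proof.
move=> c0 uc; apply: enorm_le_dotv; first by rewrite mulr_ge0.
rewrite dotvE (@le_trans _ _ (\sum_(j < n) c ^+ 2)) //.
  apply: ler_sum => j _; rewrite -expr2 -real_normK ?num_real //.
  by rewrite ler_pXn2r ?nnegrE.
rewrite sumr_const card_ord exprMn -[c ^+ 2 *+ n]mulr_natl.
apply: ler_wpM2r; first exact: sqr_ge0.
by rewrite -natrX ler_nat; case: (n) => // k; rewrite expnS expn1 leq_pmulr.
Qed.

Lemma enorm_small_eq u v : (forall e, 0 < e -> enorm (u - v) <= e) -> u = v.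
Proof.
move=> uv; apply/eqP; rewrite -subr_eq0; apply/eqP/enorm_eq0.
have := enorm_ge0 (u - v); rewrite le_eqVlt => /orP[/eqP <- //|uv0].
have := uv _ (divr_gt0 uv0 (ltr0Sn _ 1)); lra.
Qed.

End InnerProduct.

Lemma additive_isometry_dotv {R : realType} {n k : nat} (f : 'rV[R]_n -> 'rV[R]_k) :
  (forall x y, f (x + y) = f x + f y) -> (forall x, enorm (f x) = enorm x) ->
  forall x y, dotv (f x) (f y) = dotv x y.
Proof.
move=> fD fN x y; have := fN (x + y); rewrite fD => /(congr1 (fun t => t ^+ 2)).
rewrite !enorm_sqr !(dotvDl, dotvDr) (dotvC (f y)) (dotvC y) -!enorm_sqr !fN.
by move=> h; lra.
Qed.

Section LinearIsometry.
Context {R : realType} {n m : nat}.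
Implicit Types (M N : 'M[R]_(n, m)) (x y : 'rV[R]_n).

Lemma dotv_mulmx_tr M x (z : 'rV[R]_m) : dotv (z *m M^T) x = dotv z (x *m M).
Proof. by rewrite /dotv trmx_mul mulmxA. Qed.

Lemma lin_isometry_dotv M : lin_isometry M -> forall x y, dotv (x *m M) (y *m M) = dotv x y.
Proof. by move=> iM; apply: additive_isometry_dotv => // x y; rewrite mulmxDl. Qed.

Lemma lin_isometry_distE M x y : lin_isometry M -> enorm (x *m M - y *m M) = enorm (x - y).
Proof. by move=> iM; rewrite -mulmxBl iM. Qed.

Lemma lin_isometry_mulmxK M : lin_isometry M -> forall x, x *m M *m M^T = x.
Proof.
move=> iM x; apply/eqP; rewrite -subr_eq0; apply/eqP/dotvv_eq0.
by rewrite dotvBl dotv_mulmx_tr lin_isometry_dotv // subrr.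
Qed.

Lemma enorm_mulmx_tr_le N e : 0 <= e -> (forall x, enorm (x *m N) <= e * enorm x) ->
  forall z : 'rV[R]_m, enorm (z *m N^T) <= e * enorm z.
Proof.
move=> e0 Ne z; set w := z *m N^T.
have w2 : enorm w ^+ 2 <= enorm z * (e * enorm w).
  rewrite enorm_sqr {1}/w dotv_mulmx_tr; apply: le_trans (cauchy_schwarz _ _) _.
  by apply: ler_wpM2l; [exact: enorm_ge0 | exact: Ne].
have := enorm_ge0 w; rewrite le_eqVlt => /orP[/eqP <-|w0].
  by rewrite mulr_ge0 ?enorm_ge0.
by rewrite -(ler_pM2r w0); nra.
Qed.

Lemma lin_isometry_tr_le M : lin_isometry M -> forall z : 'rV[R]_m, enorm (z *m M^T) <= enorm z.
Proof.
move=> iM z; rewrite -[enorm z]mul1r; apply: enorm_mulmx_tr_le => // x.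
by rewrite iM mul1r.
Qed.

Lemma lin_isometry_image_closed M (Y : 'rV[R]_m) : lin_isometry M ->
  (forall e, 0 < e -> exists x, enorm (Y - x *m M) <= e) -> Y *m M^T *m M = Y.
Proof.
move=> iM YM; apply: enorm_small_eq => e e0.
have [x Yx] := YM _ (divr_gt0 e0 (ltr0Sn _ 1)); set w := Y - x *m M.
(* [x *m M] is fixed by the projection [M^T *m M] onto the image of [M] *)
have -> : Y *m M^T *m M - Y = w *m M^T *m M - w.
  by rewrite /w !mulmxBl lin_isometry_mulmxK // opprB addrA subrK.
apply: le_trans (enormD _ _) _; rewrite enormN iM.
have := lin_isometry_tr_le _ iM w; lra.
Qed.

Lemma lin_isometry_entry_le1 M : lin_isometry M -> forall i j, `|M i j| <= 1.
Proof.
move=> iM i j; have := coord_le_enorm ('e_i *m M) j.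
rewrite -rowE mxE rowE iM => /le_trans; apply.
rewrite /enorm dotvE (bigD1 i) //= big1 => [|k ki]; last first.
  by rewrite !mxE (negbTE ki) andbF mulr0.
by rewrite !mxE !eqxx mulr1 addr0 sqrtr1.
Qed.

Lemma enorm_mulmx_entries N e x : 0 <= e ->
  (forall i j, `|N i j| <= e) -> enorm (x *m N) <= m%:R * (n%:R * e) * enorm x.
Proof.
move=> e0 Ne; rewrite -mulrA; apply: enorm_le_coord => [|j].
  by rewrite !mulr_ge0 ?enorm_ge0.
rewrite mxE; apply: le_trans (ler_norm_sum _ _ _) _.
apply: (@le_trans _ _ (\sum_(i < n) e * enorm x)).
  apply: ler_sum => i _; rewrite normrM mulrC.
  by apply: ler_pM => //; exact: coord_le_enorm.
by rewrite sumr_const card_ord -mulrA mulr_natl.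
Qed.

End LinearIsometry.

Section Vanishing.
Context {R : realType}.
Implicit Types f g : nat -> R.

Definition vanishing f := forall e, 0 < e -> exists N, forall k, (N <= k)%N -> f k <= e.

Lemma vanishingD {f g} : vanishing f -> vanishing g -> vanishing (fun k => f k + g k).
Proof.
move=> vf vg e e0; have e2 : 0 < e / 2 by rewrite divr_gt0.
have [N1 f1] := vf _ e2; have [N2 g2] := vg _ e2.
exists (maxn N1 N2) => k; rewrite geq_max => /andP[k1 k2].
have := f1 k k1; have := g2 k k2; lra.
Qed.

Lemma vanishingZ c {f} : 0 <= c -> vanishing f -> vanishing (fun k => c * f k).
Proof.
move=> c0 vf e e0; have e1 : 0 < e / (c + 1) by rewrite divr_gt0 // ltr_wpDl.
have [N fN] := vf _ e1; exists N => k kN.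
apply: le_trans (ler_wpM2l c0 (fN k kN)) _.
by rewrite mulrA ler_pdivrMr ?ltr_wpDl //; nra.
Qed.

Lemma vanishing_le {f g} : (forall k, f k <= g k) -> vanishing g -> vanishing f.
Proof.
move=> fg vg e e0; have [N gN] := vg _ e0.
by exists N => k kN; apply: le_trans (fg k) (gN k kN).
Qed.

Lemma vanishing_comp {f} {phi : nat -> nat} :
  (forall j, (j <= phi j)%N) -> vanishing f -> vanishing (f \o phi).
Proof.
move=> phi_ge vf e e0; have [N fN] := vf _ e0.
by exists N => j jN; apply: fN; apply: leq_trans jN (phi_ge j).
Qed.

Lemma vanishing_invSn : vanishing (fun k => k.+1%:R^-1 : R).
Proof.
move=> e e0; exists (Num.Def.archi_bound e^-1) => k kN.
rewrite -(invrK e) lef_pV2 ?posrE ?invr_gt0 ?ltr0Sn //.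
apply/ltW/(lt_le_trans (archi_boundP _)); first by rewrite invr_ge0 ltW.
by rewrite ler_nat; exact: leqW.
Qed.

Lemma vanishing_dist_eq {n} {u v : 'rV[R]_n} {f} :
  vanishing f -> (forall k, enorm (u - v) <= f k) -> u = v.
Proof.
move=> vf uvf; apply: enorm_small_eq => e e0; have [N fN] := vf _ e0.
exact: le_trans (uvf N) (fN N (leqnn N)).
Qed.

Lemma econv_vanishing n (u : nat -> 'rV[R]_n) l :
  econv u l <-> vanishing (fun k => enorm (u k - l)).
Proof.
split=> ul e e0.
  by have [N uN] := ul e e0; exists N => k kN; apply/ltW/uN.
have [N uN] := ul _ (divr_gt0 e0 (ltr0Sn _ 1)); exists N => k kN.
by apply: le_lt_trans (uN k kN) _; lra.
Qed.

End Vanishing.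

Section OperatorConvergence.
Context {R : realType} {n m : nat}.
Implicit Types (Mk : nat -> 'M[R]_(n, m)) (M : 'M[R]_(n, m)).

Lemma opconv_tr {Mk M} : opconv Mk M -> opconv (fun k => (Mk k)^T) M^T.
Proof.
move=> MkM e e0; have [N MN] := MkM e e0; exists N => k kN z.
by rewrite -linearB; apply: enorm_mulmx_tr_le; [exact: ltW | exact: MN].
Qed.

Lemma opconv_vanishing {Mk M} {z : nat -> 'rV[R]_n} {B} :
  opconv Mk M -> (forall k, enorm (z k) <= B) ->
  vanishing (fun k => enorm (z k *m (Mk k - M))).
Proof.
move=> MkM zB e e0.
have B0 : 0 <= B by apply: le_trans (zB 0%N); exact: enorm_ge0.
have e1 : 0 < e / (B + 1) by rewrite divr_gt0 // ltr_wpDl.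
have [N MN] := MkM _ e1; exists N => k kN.
apply: le_trans (MN k kN (z k)) _; apply: le_trans (ler_wpM2l (ltW e1) (zB k)) _.
by rewrite mulrAC ler_pdivrMr ?ltr_wpDl //; nra.
Qed.

Lemma opconv_limit {Mk M} x (X : 'rV[R]_m) :
  opconv Mk M -> vanishing (fun k => enorm (x *m Mk k - X)) -> X = x *m M.
Proof.
move=> MkM xX; have xM := opconv_vanishing MkM (fun=> lexx (enorm x)).
apply: (vanishing_dist_eq (vanishingD xX xM)) => k /=.
have -> : X - x *m M = (X - x *m Mk k) + x *m (Mk k - M) by rewrite mulmxBr addrA subrK.
by apply: le_trans (enormD _ _) _; rewrite enorm_distC.
Qed.

Lemma opconv_entrywise Mk M :
  (forall e, 0 < e -> exists N, forall k, (N <= k)%N -> forall i j, `|Mk k i j - M i j| < e) ->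
  opconv Mk M.
Proof.
move=> MkM eps eps0; set c : R := m%:R * n%:R + 1.
have c0 : 0 < c by rewrite /c ltr_wpDl ?mulr_ge0.
have [N MN] := MkM (eps / c) (divr_gt0 eps0 c0); exists N => k kN x.
apply: le_trans (enorm_mulmx_entries _ _ x (ltW (divr_gt0 eps0 c0)) _) _.
  by move=> i j; rewrite !mxE; apply/ltW/MN.
apply: ler_wpM2r; first exact: enorm_ge0.
have -> : m%:R * (n%:R * (eps / c)) = eps - eps / c by rewrite /c; field; rewrite -/c gt_eqF.
by rewrite lerBlDr lerDl ltW // divr_gt0.
Qed.

Lemma lin_isometry_factor_limit {Mk M} {ys : nat -> 'rV[R]_n} {Ys : nat -> 'rV[R]_m} y Y :
  (forall k, lin_isometry (Mk k)) -> opconv Mk M -> (forall k, Ys k = ys k *m Mk k) ->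
  vanishing (fun k => enorm (Ys k - Y)) -> vanishing (fun k => enorm (ys k - y)) ->
  Y = y *m M.
Proof.
move=> iMk MkM Yy vY vy; apply: (opconv_limit _ _ MkM).
apply: vanishing_le (vanishingD vy vY) => k.
have -> : y *m Mk k - Y = (y - ys k) *m Mk k + (Ys k - Y) by rewrite Yy mulmxBl addrA subrK.
apply: le_trans (enormD _ _) _. by rewrite (iMk k) [enorm (y - _)]enorm_distC.
Qed.

End OperatorConvergence.

Lemma lin_isometry_factor_tr_limit {R : realType} {n m : nat} {Mk : nat -> 'M[R]_(n, m)} {M}
    {ys : nat -> 'rV[R]_n} {Ys : nat -> 'rV[R]_m} Y :
  (forall k, lin_isometry (Mk k)) -> opconv Mk M -> (forall k, Ys k = ys k *m Mk k) ->
  vanishing (fun k => enorm (Ys k - Y)) -> vanishing (fun k => enorm (ys k - Y *m M^T)).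
Proof.
move=> iMk MkM Yy vY.
have vM := opconv_vanishing (opconv_tr MkM) (fun=> lexx (enorm Y)).
apply: vanishing_le (vanishingD vY vM) => k /=.
have -> : ys k - Y *m M^T = (Ys k - Y) *m (Mk k)^T + Y *m ((Mk k)^T - M^T).
  by rewrite Yy mulmxBl lin_isometry_mulmxK // mulmxBr addrA subrK.
by apply: le_trans (enormD _ _) _; apply: lerD => //; exact: lin_isometry_tr_le.
Qed.

Lemma econv_lin_isometry {R : realType} {n m : nat} (M : 'M[R]_(n, m)) u l :
  lin_isometry M -> econv u l -> econv (fun k => u k *m M) (l *m M).
Proof.
by move=> iM ul e e0; have [N uN] := ul e e0; exists N => k kN; rewrite lin_isometry_distE ?uN.
Qed.

Lemma bounded_rV_cluster {R : realType} {p : nat} (u : nat -> 'rV[R]_p) (B : R) :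
  (forall k i, `|u k 0 i| <= B) ->
  exists l : 'rV[R]_p, forall eps, 0 < eps -> forall N, exists2 k, (N <= k)%N &
    forall i, `|u k 0 i - l 0 i| < eps.
Proof.
move=> uB; pose K := [set v : 'rV[R]_p | forall i, `[(- B), B]%classic (v ord0 i)].
have cK : compact K.
  by apply: (@rV_compact _ _ (fun=> `[(- B), B]%classic)) => _; apply: segment_compact.
have uK : \forall k \near \oo, K (u k).
  by near=> k => i /=; rewrite in_itv /= -ler_norml; exact: uB.
have [l [_ ul]] := cK (u @ \oo) _ uK.
exists l => eps eps0 N.
have uN : (u @ \oo) (u @` [set k | (N <= k)%N]).
  by apply: filterS (nbhs_infty_ge N) => k kN; exists k.
have [_ [[k kN <-] [_ ukl]]] := ul _ _ uN (nbhsx_ballx l _ eps0).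
by exists k => // i; move: (ukl 0 i); rewrite -ball_normE /= distrC.
Unshelve. all: by end_near. Qed.

Lemma bounded_mx_subseq {R : realType} {p q : nat} (Mk : nat -> 'M[R]_(p, q)) B :
  (forall k i j, `|Mk k i j| <= B) ->
  exists phi : nat -> nat, exists L : 'M[R]_(p, q), (forall j, (j <= phi j)%N) /\
    forall e, 0 < e -> exists N, forall j, (N <= j)%N ->
      forall i i', `|Mk (phi j) i i' - L i i'| < e.
Proof.
move=> MB; have [l ul] : exists l : 'rV[R]_(p * q), forall eps, 0 < eps -> forall N,
    exists2 k, (N <= k)%N & forall i, `|mxvec (Mk k) 0 i - l 0 i| < eps.
  apply: (@bounded_rV_cluster _ _ _ B) => k i.
  by case/mxvec_indexP: i => i j; rewrite mxvecE; exact: MB.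
have near_l j : exists k, (j <= k)%N /\
    forall i, `|mxvec (Mk k) 0 i - l 0 i| < j.+1%:R^-1.
  have [|k jk lk] := ul j.+1%:R^-1 _ j; first by rewrite invr_gt0 ltr0Sn.
  by exists k.
have [phi phiP] := choice near_l.
exists phi, (vec_mx l); split=> [j|e e0]; first by case: (phiP j).
have [N NE] := vanishing_invSn _ (divr_gt0 e0 (ltr0Sn _ 1)); exists N => j jN i i'.
have -> : vec_mx l i i' = l 0 (mxvec_index i i') by rewrite -{2}(vec_mxK l) mxvecE.
case: (phiP j) => _ /(_ (mxvec_index i i')); rewrite mxvecE => /lt_le_trans; apply.
by apply: le_trans (NE j jN) _; lra.
Qed.

Lemma lin_isometry_subseq_opconv {R : realType} {n m : nat} (Mk : nat -> 'M[R]_(n, m)) :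
  (forall k, lin_isometry (Mk k)) ->
  exists phi : nat -> nat, exists L, (forall j, (j <= phi j)%N) /\ opconv (Mk \o phi) L.
Proof.
move=> iMk; have [phi [L [phi_ge MkL]]] :=
  bounded_mx_subseq _ _ (fun k => lin_isometry_entry_le1 _ (iMk k)).
by exists phi, L; split=> //; apply: opconv_entrywise.
Qed.

Section FrechetNormal.
Context {R : realType} {n : nat}.
Implicit Types (C : set 'rV[R]_n) (x y z : 'rV[R]_n).

Lemma frechet_normal_ineq {C x y} : frechet_normal C x y ->
  forall eps, 0 < eps -> exists2 delta, 0 < delta & forall z, C z ->
    enorm (z - x) < delta -> dotv (z - x) y <= eps * enorm (z - x).
Proof.
move=> [_ Fy] eps eps0; have [delta delta0 zy] := Fy eps eps0.
exists delta => // z Cz; have [->|zx] := eqVneq z x.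
  by rewrite subrr dotv0l enorm0 mulr0.
exact: zy.
Qed.

(* [|z - x - t y| <= t |y|] expands to [|z - x|^2 <= 2 t <z - x, y>]. *)
Lemma frechet_normal_ray {C x y} : frechet_normal C x y ->
  forall eps, 0 < eps -> exists2 delta, 0 < delta & forall z t, C z -> 0 <= t ->
    enorm (z - x - t *: y) <= t * enorm y -> enorm (z - x) < delta ->
    enorm (z - x) <= 2 * t * eps.
Proof.
move=> Fy eps eps0; have [delta delta0 zy] := frechet_normal_ineq Fy _ eps0.
exists delta => // z t Cz t0 zt zx; have := zy z Cz zx.
have : enorm (z - x - t *: y) ^+ 2 <= (t * enorm y) ^+ 2.
  by rewrite ler_pXn2r ?nnegrE ?mulr_ge0 ?enorm_ge0.
rewrite enorm_sqrB enormZ ger0_norm // dotvZr.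
have := enorm_ge0 (z - x); set d := enorm (z - x); set p := dotv (z - x) y.
rewrite le_eqVlt => /orP[/eqP <- _ _|d0 dp dpe]; first by rewrite !mulr_ge0 // ltW.
rewrite -(ler_pM2r d0); nra.
Qed.

End FrechetNormal.

Lemma frechet_normal_pullback {R : realType} {n k : nat} {M : 'M[R]_(n, k)}
    {D : set 'rV[R]_n} {C : set 'rV[R]_k} {x Y} :
  lin_isometry M -> (forall z, D z -> C (z *m M)) -> D x ->
  frechet_normal C (x *m M) Y -> frechet_normal D x (Y *m M^T).
Proof.
move=> iM DC Dx FY; split=> // eps eps0.
have [delta delta0 zY] := frechet_normal_ineq FY _ eps0.
exists delta => // z Dz _ zx; rewrite dotvC dotv_mulmx_tr dotvC mulmxBl.
by rewrite -(lin_isometry_distE _ _ _ iM) in zx *; apply: zY; first exact: DC.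
Qed.

Section SpectralDecompositionSystem.
Context {R : realType} {n m : nat} {G : Type} {gmul : G -> G -> G} {gone : G}
  {ginv : G -> G} {act : G -> 'rV[R]_n -> 'rV[R]_n} {gamma : 'rV[R]_m -> 'rV[R]_n}
  {A : Type} {Lam : A -> 'M[R]_(n, m)}.
Hypothesis sds : spectral_decomposition_system gmul gone ginv act gamma Lam.

Lemma Lam_isometry a : lin_isometry (Lam a).
Proof. by case: sds. Qed.

Lemma gamma_decomposition X : exists a, X = gamma X *m Lam a.
Proof. by case: sds => _ _ _ []. Qed.

Lemma dotv_le_gamma X Y : dotv X Y <= dotv (gamma X) (gamma Y).
Proof. by case: sds => _ _ _ []. Qed.

Lemma gamma_Lam_orbit a x : exists s, gamma (x *m Lam a) = act s x.
Proof.
by case: sds => _ _ _ [[tau [_ tau_orbit gamma_Lam]] _ _]; rewrite gamma_Lam.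
Qed.

Lemma act_dotv s x y : dotv (act s x) (act s y) = dotv x y.
Proof.
case: sds => _ [_ _ act_linear act_norm] _ _; apply: additive_isometry_dotv => // u v.
by have := act_linear s 1 u v; rewrite !scale1r.
Qed.

Lemma act_invK s x : act (ginv s) (act s x) = x.
Proof. by case: sds => [[_ _ _ mulVg _] [act1 actM _ _] _ _]; rewrite -actM mulVg act1. Qed.

Lemma enorm_gamma X : enorm (gamma X) = enorm X.
Proof. by have [a {2}->] := gamma_decomposition X; rewrite Lam_isometry. Qed.

Lemma gamma_dist_le X Y : enorm (gamma X - gamma Y) <= enorm (X - Y).
Proof.
apply: enorm_le_dotv; first exact: enorm_ge0.
by rewrite -!enorm_sqr !enorm_sqrB !enorm_gamma lerD2l lerN2 ler_pM2l ?dotv_le_gamma.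
Qed.

Context (D : set 'rV[R]_n).
Hypothesis D_invariant : S_invariant act D.

Lemma Lam_preimage a x : D x -> (gamma @^-1` D) (x *m Lam a).
Proof.
by move=> Dx; have [s gs] := gamma_Lam_orbit a x; rewrite /preimage /= gs; exact: D_invariant.
Qed.

(* With [gamma ((x + t y) Lam a) = s (x + t y)], take [w = s^-1 (gamma Z)]; then [C] reads
   [<Z, (x + t y) Lam a> <= <w, x + t y>], while [|w| = |Z|]. *)
Lemma preimage_comparison a x y t Z : (gamma @^-1` D) Z ->
  exists2 w, D w & 2 * t * dotv (Z - x *m Lam a) (y *m Lam a)
    <= enorm (Z - x *m Lam a) ^+ 2 - enorm (w - x) ^+ 2 + 2 * t * dotv (w - x) y.
Proof.
move=> DZ; have [s gs] := gamma_Lam_orbit a (x + t *: y).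
exists (act (ginv s) (gamma Z)); first exact: D_invariant.
set w := act (ginv s) (gamma Z).
have wZ : enorm w = enorm Z by rewrite /enorm act_dotv -/(enorm _) enorm_gamma.
have := dotv_le_gamma Z ((x + t *: y) *m Lam a).
rewrite gs -(act_dotv (ginv s)) act_invK -/w mulmxDl -scalemxAl !dotvDr !dotvZr.
rewrite !enorm_sqrB wZ Lam_isometry !dotvBl lin_isometry_dotv; last exact: Lam_isometry.
by move=> ?; lra.
Qed.

Lemma frechet_normal_Lam a x y : frechet_normal D x y ->
  frechet_normal (gamma @^-1` D) (x *m Lam a) (y *m Lam a).
Proof.
move=> Fy; have [Dx _] := Fy; split; first exact: Lam_preimage.
move=> eps eps0; have [delta delta0 wy] := frechet_normal_ineq Fy _ eps0.
have y0 := enorm_ge0 y; set c := eps * delta / (2 * (enorm y + 1)).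
have c0 : 0 < c by rewrite divr_gt0 ?mulr_gt0 // ltr_wpDl.
exists c => // Z DZ ZX Zc; set r0 := enorm (Z - x *m Lam a).
have r0_gt0 : 0 < r0 by apply: enorm_gt0; rewrite subr_eq0.
pose t := r0 / eps; have t0 : 0 < t by rewrite divr_gt0.
have teps : r0 = t * eps by rewrite /t mulfVK ?gt_eqF.
have [w Dw] := preimage_comparison a x y t Z DZ; rewrite -/r0.
set p := dotv _ _; set r := enorm (w - x) => wp.
have r_ge0 : 0 <= r := enorm_ge0 _.
rewrite -(ler_pM2l (mulr_gt0 (ltr0Sn R 1) t0)).
have [r_lt|r_ge] := ltP r delta.
  have := wy w Dw r_lt; rewrite -/r => wxy.
  have : 0 <= (r - r0) ^+ 2 := sqr_ge0 _.
  rewrite teps in wp *; nra.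
(* far from [x], [t |y| <= delta / 2 <= r / 2] absorbs the Cauchy-Schwarz term *)
have ty : 2 * t * enorm y <= r.
  apply: le_trans r_ge; move: Zc; rewrite -/r0 teps /c ltr_pdivlMr ?mulr_gt0 ?ltr_wpDl //.
  by nra.
have := cauchy_schwarz (w - x) y; rewrite -/r => wxy.
rewrite teps in wp *; nra.
Qed.

Hypothesis Lam_closed : opclosed (range Lam).

Lemma Lam_subseq_opconv (b : nat -> A) : exists phi : nat -> nat, exists b0,
  (forall j, (j <= phi j)%N) /\ opconv (fun j => Lam (b (phi j))) (Lam b0).
Proof.
have [phi [L [phi_ge bL]]] := lin_isometry_subseq_opconv _ (fun k => Lam_isometry (b k)).
have [b0 _ b0L] := Lam_closed _ _ (fun j => imageT Lam (b (phi j))) bL.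
by exists phi, b0; rewrite b0L.
Qed.

(* Decompose [X + t_k Y = u_k Lam (b k)] with [t_k = 1/(k+1)]; then [gamma X Lam (b k)] lies
   within [t_k |Y|] of the point [X + t_k Y], and [v_k = (u_k - gamma X) / t_k]. *)
Lemma frechet_normal_ray_approx X Y : frechet_normal (gamma @^-1` D) X Y ->
  exists (b : nat -> A) (v : nat -> 'rV[R]_n), [/\ forall k, enorm (v k) <= enorm Y,
    vanishing (fun k => enorm (gamma X *m Lam (b k) - X)) &
    vanishing (fun k => enorm (Y - v k *m Lam (b k)))].
Proof.
move=> FY; have [DX _] := FY; set x := gamma X.
pose t k : R := k.+1%:R^-1; have t_gt0 k : 0 < t k by rewrite invr_gt0 ltr0Sn.
have [b Xb] := choice (fun k => gamma_decomposition (X + t k *: Y)).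
pose u k := gamma (X + t k *: Y); pose Z k := x *m Lam (b k).
have ux k : enorm (u k - x) <= t k * enorm Y.
  have := gamma_dist_le (X + t k *: Y) X.
  by rewrite addrAC subrr add0r enormZ ger0_norm ?(ltW (t_gt0 k)).
have Z_ray k : enorm (Z k - X - t k *: Y) <= t k * enorm Y.
  have -> : Z k - X - t k *: Y = x *m Lam (b k) - u k *m Lam (b k).
    by rewrite /u -Xb opprD addrA.
  rewrite lin_isometry_distE; last exact: Lam_isometry.
  by rewrite enorm_distC.
have ZX k : enorm (Z k - X) <= 2 * t k * enorm Y.
  have -> : Z k - X = (Z k - X - t k *: Y) + t k *: Y by rewrite subrK.
  apply: le_trans (enormD _ _) _; rewrite enormZ ger0_norm ?(ltW (t_gt0 k)) //.
  by have := Z_ray k; lra.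
have vZX : vanishing (fun k => enorm (Z k - X)).
  apply: (vanishing_le ZX); under eq_fun do rewrite mulrAC.
  by apply: vanishingZ vanishing_invSn; rewrite mulr_ge0 ?enorm_ge0.
exists b, (fun k => (t k)^-1 *: (u k - x)); split => // [k|].
  by rewrite enormZ ger0_norm ?invr_ge0 ?(ltW (t_gt0 k)) // ler_pdivrMl.
have Yv k : Y - (t k)^-1 *: (u k - x) *m Lam (b k) = (t k)^-1 *: (Z k - X).
  rewrite -scalemxAl mulmxBl -/(Z k) /u -Xb; apply/rowP => j; rewrite !mxE.
  by field; rewrite gt_eqF.
move=> e e0; have [delta delta0 Z_near] := frechet_normal_ray FY _ (divr_gt0 e0 (ltr0Sn R 1)).
have [N NZ] := vZX _ (divr_gt0 delta0 (ltr0Sn R 1)); exists N => k kN.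
rewrite Yv enormZ ger0_norm ?invr_ge0 ?(ltW (t_gt0 k)) // ler_pdivrMl //.
have := Z_near (Z k) (t k) (Lam_preimage (b k) x DX) (ltW (t_gt0 k)) (Z_ray k).
move: (NZ k kN) (t_gt0 k) => NZk tk; nra.
Qed.

Lemma frechet_normal_preimage_decomp X Y : frechet_normal (gamma @^-1` D) X Y ->
  exists y a, [/\ frechet_normal D (gamma X) y, A_of gamma Lam X a & Y = y *m Lam a].
Proof.
move=> FY; have [DX _] := FY.
have [b [v [vY vX vYv]]] := frechet_normal_ray_approx _ _ FY.
have [phi [b0 [phi_ge bL]]] := Lam_subseq_opconv b.
have X_L : X = gamma X *m Lam b0 := opconv_limit _ _ bL (vanishing_comp phi_ge vX).
have Y_L : Y *m (Lam b0)^T *m Lam b0 = Y.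
  apply: lin_isometry_image_closed; first exact: Lam_isometry.
  have := vanishingD (vanishing_comp phi_ge vYv) (opconv_vanishing bL (fun j => vY (phi j))).
  move=> vYL e /vYL[N NYL]; exists (v (phi N)); apply: le_trans (NYL N (leqnn N)).
  have -> : Y - v (phi N) *m Lam b0 =
      (Y - v (phi N) *m Lam (b (phi N))) + v (phi N) *m (Lam (b (phi N)) - Lam b0).
    by rewrite mulmxBr addrA subrK.
  exact: enormD.
exists (Y *m (Lam b0)^T), b0; split=> //.
apply: (frechet_normal_pullback (Lam_isometry b0) (Lam_preimage b0) DX).
by rewrite -X_L.
Qed.

Lemma frechet_normal_preimage X : frechet_normal (gamma @^-1` D) X =
  [set Y | exists y a, [/\ frechet_normal D (gamma X) y, A_of gamma Lam X a & Y = y *m Lam a]].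
Proof.
apply/seteqP; split=> [Y|_ [y [a [Fy Xa ->]]]]; first exact: frechet_normal_preimage_decomp.
by rewrite [in frechet_normal _ X]Xa; exact: frechet_normal_Lam.
Qed.

Lemma limiting_normal_Lam a x y : limiting_normal D x y ->
  limiting_normal (gamma @^-1` D) (x *m Lam a) (y *m Lam a).
Proof.
move=> [Dx [xs [ys [xsx [ysy Fys]]]]]; split; first exact: Lam_preimage.
exists (fun k => xs k *m Lam a), (fun k => ys k *m Lam a).
have iL := Lam_isometry a.
split; first exact: econv_lin_isometry.
split; first exact: econv_lin_isometry.
by move=> k; exact: frechet_normal_Lam.
Qed.

Lemma limiting_normal_preimage_decomp X Y : limiting_normal (gamma @^-1` D) X Y ->
  exists y a, [/\ limiting_normal D (gamma X) y, A_of gamma Lam X a & Y = y *m Lam a].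
Proof.
move=> [DX [Xs [Ys [/econv_vanishing XsX [/econv_vanishing YsY FYs]]]]].
have decomp k : exists p : 'rV[R]_n * A, [/\ frechet_normal D (gamma (Xs k)) p.1,
    A_of gamma Lam (Xs k) p.2 & Ys k = p.1 *m Lam p.2].
  by have [y [a ya]] := frechet_normal_preimage_decomp _ _ (FYs k); exists (y, a).
have [p pP] := choice decomp.
have Xs_p k : Xs k = gamma (Xs k) *m Lam (p k).2 by case: (pP k).
have Ys_p k : Ys k = (p k).1 *m Lam (p k).2 by case: (pP k).
have [phi [b0 [phi_ge bL]]] := Lam_subseq_opconv (fun k => (p k).2).
have iL j : lin_isometry (Lam (p (phi j)).2) by exact: Lam_isometry.
have vX := vanishing_comp phi_ge XsX; have vY := vanishing_comp phi_ge YsY.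
have vgX : vanishing (fun j => enorm (gamma (Xs (phi j)) - gamma X)).
  by apply: vanishing_le vX => j; exact: gamma_dist_le.
have vy := lin_isometry_factor_tr_limit Y iL bL (fun j => Ys_p (phi j)) vY.
exists (Y *m (Lam b0)^T), b0; split.
- split=> //; exists (fun j => gamma (Xs (phi j))), (fun j => (p (phi j)).1).
  split; first by apply/econv_vanishing.
  by split; [apply/econv_vanishing | move=> j; case: (pP (phi j))].
- exact: (lin_isometry_factor_limit (gamma X) X iL bL (fun j => Xs_p (phi j)) vX vgX).
- exact: (lin_isometry_factor_limit _ Y iL bL (fun j => Ys_p (phi j)) vY vy).
Qed.

Lemma limiting_normal_preimage X : limiting_normal (gamma @^-1` D) X =
  [set Y | exists y a, [/\ limiting_normal D (gamma X) y, A_of gamma Lam X a & Y = y *m Lam a]].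
Proof.
apply/seteqP; split=> [Y|_ [y [a [Ly Xa ->]]]]; first exact: limiting_normal_preimage_decomp.
by rewrite [in limiting_normal _ X]Xa; exact: limiting_normal_Lam.
Qed.

End SpectralDecompositionSystem.

Theorem proposition3p4 (R : realType) (n m : nat)
    (G : Type) (gmul : G -> G -> G) (gone : G) (ginv : G -> G)
    (act : G -> 'rV[R]_n -> 'rV[R]_n)
    (gamma : 'rV[R]_m -> 'rV[R]_n) (A : Type) (Lam : A -> 'M[R]_(n, m)) :
  spectral_decomposition_system gmul gone ginv act gamma Lam ->
  opclosed (range Lam) ->
  forall (D : set 'rV[R]_n), D !=set0 -> S_invariant act D ->
  forall X : 'rV[R]_m,
    frechet_normal (gamma @^-1` D) X =
      [set Y | exists y a, [/\ frechet_normal D (gamma X) y,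
                               A_of gamma Lam X a & Y = y *m Lam a]] /\
    limiting_normal (gamma @^-1` D) X =
      [set Y | exists y a, [/\ limiting_normal D (gamma X) y,
                               A_of gamma Lam X a & Y = y *m Lam a]].
Proof.
move=> sds Lam_closed D _ D_invariant X.
split; first exact: frechet_normal_preimage sds D D_invariant Lam_closed X.
exact: limiting_normal_preimage sds D D_invariant Lam_closed X.
Qed.
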